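(* Let $K$ be a field of characteristic $0$, $\eta\in K\setminus\{0\}$ not a root of unity, $A=A_\eta=A(1+\eta,-\eta,1)$, $\epsilon=(\eta-1)^{-1}$ and $w=-ud+du+\epsilon$. Let $N=A/A(d-1)$ and for $a\in A$ write $\bar a$ for its image in $N$. Then every nonzero submodule $U$ of $N$ contains $\overline{w^m}$ for some integer $m\ge0$.
   Context: The down-up algebra $A(\alpha,\beta,\gamma)$ is the $K$-algebra generated by $d,u$ with relations $d^2u=\alpha dud+\beta ud^2+\gamma d$ and $du^2=\alpha udu+\beta u^2d+\gamma u$. In $A_\eta$, $w$ is normal with $dw=\eta wd$, $uw=\eta^{-1}wu$. *)

From HB Require Import structures.
From mathcomp Require Import all_boot all_order all_algebra.
Set Implicit Arguments. Unset Strict Implicit. Unset Printing Implicit Defensive.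
Import GRing.Theory.
Local Open Scope ring_scope.

(* The free associative K-algebra K<d,u> on two noncommuting letters,
   realised as coefficient functions on words (letter false = d,
   letter true = u); genuine elements are those of finite support. *)
Definition ncp (K : fieldType) := seq bool -> K.

Section FreeAlg.
Variable K : fieldType.

Definition nc_fin (f : ncp K) : Prop :=
  exists n : nat, forall s : seq bool, (n <= size s)%N -> f s = 0.

Definition nc_zero : ncp K := fun _ => 0.
Definition nc_add (f g : ncp K) : ncp K := fun s => f s + g s.
Definition nc_opp (f : ncp K) : ncp K := fun s => - f s.
Definition nc_sub (f g : ncp K) : ncp K := nc_add f (nc_opp g).
Definition nc_scale (c : K) (f : ncp K) : ncp K := fun s => c * f s.
Definition nc_mul (f g : ncp K) : ncp K :=
  fun s => \sum_(i < (size s).+1) f (take i s) * g (drop i s).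
Definition nc_mono (w : seq bool) : ncp K := fun s => if s == w then 1 else 0.
Definition nc_const (c : K) : ncp K := nc_scale c (nc_mono [::]).
Definition nc_one : ncp K := nc_mono [::].
Definition nc_exp (f : ncp K) (m : nat) : ncp K := iter m (nc_mul f) nc_one.

Definition ncd : ncp K := nc_mono [:: false].
Definition ncu : ncp K := nc_mono [:: true].

Definition is_left_ideal (J : ncp K -> Prop) : Prop :=
  [/\ (forall x, J x -> nc_fin x),
      J nc_zero,
      (forall x y, J x -> J y -> J (nc_add x y)) &
      (forall a x, nc_fin a -> J x -> J (nc_mul a x))].

Definition downup_rel1 (al be ga : K) : ncp K :=
  nc_sub (nc_mono [:: false; false; true])
    (nc_add (nc_scale al (nc_mono [:: false; true; false]))
      (nc_add (nc_scale be (nc_mono [:: true; false; false]))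
              (nc_scale ga ncd))).
Definition downup_rel2 (al be ga : K) : ncp K :=
  nc_sub (nc_mono [:: false; true; true])
    (nc_add (nc_scale al (nc_mono [:: true; false; true]))
      (nc_add (nc_scale be (nc_mono [:: true; true; false]))
              (nc_scale ga ncu))).

(* J contains the kernel of K<d,u> -> A(al,be,ga) -> N = A/A(d-1), i.e. the
   two-sided ideal generated by the relations (= left ideal generated by
   rel*b) plus the left ideal generated by d - 1. *)
Definition contains_N_kernel (al be ga : K) (J : ncp K -> Prop) : Prop :=
  [/\ (forall b, nc_fin b -> J (nc_mul (downup_rel1 al be ga) b)),
      (forall b, nc_fin b -> J (nc_mul (downup_rel2 al be ga) b)) &
      J (nc_sub ncd nc_one)].

Definition N_kernel (al be ga : K) (x : ncp K) : Prop :=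
  forall J, is_left_ideal J -> contains_N_kernel al be ga J -> J x.

End FreeAlg.

(* A submodule of N is represented by its preimage J in the free algebra
   K<d,u>, a left ideal containing the kernel of K<d,u> -> N.  The proof runs:
   - the coefficient functions [ncp K] form a K-algebra under the Cauchy
     product, so that the generic ring and algebra theory applies;
   - with w = du - ud + eps the defining relations of A_eta read
     d w = eta w d and w u = eta u w; consequently, in N,
       d (u^i w^m) = eta^m u^i w^m + q_i u^(i-1) w^(m+1) - i eps u^(i-1) w^m,
     where q_i = 1 + eta + ... + eta^(i-1) ([d_action]);
   - every element of N is a finite combination of the u^i w^m
     ([spanning]), on whose coefficient arrays d acts explicitly ([comb_d]);
   - descent ([descent]): in a nonzero element of the submodule, operators
     d - eta^B first reduce the highest nonzero row to a single entry (the
     eta^m are distinct because eta is not a root of unity), and one more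
     such operator moves that entry one row down with the nonzero factor
     -i eps (char K = 0); in row 0 a single entry is a multiple of w^B. *)

From HB Require Import structures.
From mathcomp Require Import all_boot all_order all_algebra.
From mathcomp Require Import boolp zify ring.
Set Implicit Arguments. Unset Strict Implicit. Unset Printing Implicit Defensive.
Import GRing.Theory.
Local Open Scope ring_scope.

Section FreeAlgebra.
Variable K : fieldType.
Implicit Types (f g h : ncp K) (s : seq bool) (b : bool) (a c : K).

HB.instance Definition _ := gen_eqMixin (ncp K).
HB.instance Definition _ := gen_choiceMixin (ncp K).

Lemma nc_addA : associative (@nc_add K).
Proof. by move=> f g h; apply: funext => s; rewrite /nc_add addrA. Qed.
Lemma nc_addC : commutative (@nc_add K).
Proof. by move=> f g; apply: funext => s; rewrite /nc_add addrC. Qed.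
Lemma nc_add0 : left_id (nc_zero K) (@nc_add K).
Proof. by move=> f; apply: funext => s; rewrite /nc_add /nc_zero add0r. Qed.
Lemma nc_addN : left_inverse (nc_zero K) (@nc_opp K) (@nc_add K).
Proof. by move=> f; apply: funext => s; rewrite /nc_add /nc_opp /nc_zero addNr. Qed.

HB.instance Definition _ :=
  GRing.isZmodule.Build (ncp K) nc_addA nc_addC nc_add0 nc_addN.

Lemma ncE_add f g s : (f + g) s = f s + g s. Proof. by []. Qed.
Lemma ncE_opp f s : (- f) s = - f s. Proof. by []. Qed.

(* [nc_tail b f] is the left derivative of f by the letter b: the
   coefficient of a word s in it is that of b :: s in f.  The Cauchy product
   is then computed by peeling off the first letter. *)
Definition nc_tail b f : ncp K := fun s => f (b :: s).

Lemma nc_mul_nil f g : nc_mul f g [::] = f [::] * g [::].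
Proof. by rewrite /nc_mul big_ord_recl big_ord0 addr0. Qed.

Lemma nc_mul_cons f g b s :
  nc_mul f g (b :: s) = f [::] * g (b :: s) + nc_mul (nc_tail b f) g s.
Proof. by rewrite /nc_mul big_ord_recl. Qed.

Lemma nc_mulDl f g h : nc_mul (f + g) h = nc_mul f h + nc_mul g h.
Proof.
apply: funext => s; rewrite /nc_mul ncE_add -big_split.
by apply: eq_bigr => i _; rewrite mulrDl.
Qed.

Lemma nc_mulDr f g h : nc_mul f (g + h) = nc_mul f g + nc_mul f h.
Proof.
apply: funext => s; rewrite /nc_mul ncE_add -big_split.
by apply: eq_bigr => i _; rewrite mulrDr.
Qed.

Lemma nc_scale_mull c f g : nc_scale c (nc_mul f g) = nc_mul (nc_scale c f) g.
Proof.
apply: funext => s; rewrite /nc_mul /nc_scale mulr_sumr.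
by apply: eq_bigr => i _; rewrite mulrA.
Qed.

Lemma nc_scale_mulr c f g : nc_scale c (nc_mul f g) = nc_mul f (nc_scale c g).
Proof.
apply: funext => s; rewrite /nc_mul /nc_scale mulr_sumr.
by apply: eq_bigr => i _; rewrite mulrCA.
Qed.

Lemma nc_tail_mul f g b :
  nc_tail b (nc_mul f g) = nc_scale (f [::]) (nc_tail b g) + nc_mul (nc_tail b f) g.
Proof. by apply: funext => s; rewrite /nc_tail nc_mul_cons. Qed.

Lemma nc_mulA : associative (@nc_mul K).
Proof.
move=> f g h; apply: funext => s; elim: s f g h => [|b s IH] f g h.
  by rewrite !nc_mul_nil mulrA.
rewrite !nc_mul_cons nc_mul_nil nc_tail_mul nc_mulDl -nc_scale_mull.
by rewrite !ncE_add /nc_scale IH mulrDr mulrA addrA.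
Qed.

Lemma nc_mul1 : left_id (nc_one K) (@nc_mul K).
Proof.
move=> f; apply: funext => [[|b s]];
  rewrite ?nc_mul_nil ?nc_mul_cons /nc_one /nc_mono eqxx mul1r //.
by rewrite /nc_mul big1 ?addr0 // => i _; rewrite /nc_tail mul0r.
Qed.

Lemma nc_mul1r : right_id (nc_one K) (@nc_mul K).
Proof.
move=> f; apply: funext => s; elim: s f => [|b s IH] f.
  by rewrite nc_mul_nil /nc_one /nc_mono eqxx mulr1.
by rewrite nc_mul_cons IH /nc_one /nc_mono /= mulr0 add0r.
Qed.

Lemma nc_one_neq0 : nc_one K != nc_zero K.
Proof.
apply/eqP => /(congr1 (fun f => f [::])).
by rewrite /nc_one /nc_mono /nc_zero eqxx => /eqP; rewrite oner_eq0.
Qed.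

HB.instance Definition _ := GRing.Zmodule_isNzRing.Build (ncp K)
  nc_mulA nc_mul1 nc_mul1r nc_mulDl nc_mulDr nc_one_neq0.

Lemma nc_scaleA a c f : nc_scale a (nc_scale c f) = nc_scale (a * c) f.
Proof. by apply: funext => s; rewrite /nc_scale mulrA. Qed.
Lemma nc_scale1 : left_id 1 (@nc_scale K).
Proof. by move=> f; apply: funext => s; rewrite /nc_scale mul1r. Qed.
Lemma nc_scaleDr : right_distributive (@nc_scale K) +%R.
Proof. by move=> a f g; apply: funext => s; rewrite /nc_scale ncE_add mulrDr. Qed.
Lemma nc_scaleDl f : {morph (nc_scale (K:=K))^~ f : a c / a + c}.
Proof. by move=> a c; apply: funext => s; rewrite /nc_scale ncE_add mulrDl. Qed.

HB.instance Definition _ := GRing.Zmodule_isLmodule.Build K (ncp K)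
  nc_scaleA nc_scale1 nc_scaleDr nc_scaleDl.
HB.instance Definition _ := GRing.Lmodule_isLalgebra.Build K (ncp K) nc_scale_mull.
HB.instance Definition _ := GRing.Lalgebra_isAlgebra.Build K (ncp K) nc_scale_mulr.

Lemma ncE_one s : (1 : ncp K) s = (s == [::])%:R.
Proof. by rewrite /GRing.one /= /nc_one /nc_mono; case: eqP. Qed.
Lemma nc_mulE f g : nc_mul f g = f * g. Proof. by []. Qed.
Lemma ncE_scale a f s : (a *: f) s = a * f s. Proof. by []. Qed.
Lemma ncE_mono w s : nc_mono K w s = if s == w then 1 else 0. Proof. by []. Qed.
Lemma nc_expE f m : nc_exp f m = f ^+ m.
Proof. by elim: m => [|m IH] //; rewrite exprS -IH. Qed.

Lemma nc_tail_mono1 b b' :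
  nc_tail b' (nc_mono K [:: b]) = if b' == b then 1 else 0.
Proof.
apply: funext => t; rewrite /nc_tail /nc_mono eqseq_cons.
by case: (b' == b); rewrite // /GRing.one /= /nc_one /nc_mono.
Qed.

Lemma nc_mono_cons b s : nc_mono K (b :: s) = nc_mono K [:: b] * nc_mono K s.
Proof.
apply: funext => [[|b' t]]; rewrite /GRing.mul /=.
  by rewrite nc_mul_nil /nc_mono /= mul0r.
rewrite nc_mul_cons nc_tail_mono1 /= mul0r add0r ncE_mono eqseq_cons.
by case: (b' == b); rewrite nc_mulE ?mul1r ?mul0r.
Qed.

Lemma nc_mono_cat s t : nc_mono K s * nc_mono K t = nc_mono K (s ++ t).
Proof.
elim: s => [|b s IH] /=; first exact: mul1r.
by rewrite nc_mono_cons -mulrA IH -nc_mono_cons.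
Qed.

Lemma nc_first_letter f :
  f = (f [::])%:A + ncd K * nc_tail false f + ncu K * nc_tail true f.
Proof.
apply: funext => [[|b s]]; rewrite !ncE_add /GRing.mul /=.
  by rewrite !nc_mul_nil ncE_scale ncE_one /= !mul0r !addr0 mulr1.
rewrite !nc_mul_cons !nc_tail_mono1 ncE_scale ncE_one /= mulr0 !mul0r !add0r.
by case: b; rewrite !nc_mulE mul0r mul1r ?addr0 ?add0r.
Qed.

Lemma nc_fin0 : nc_fin (0 : ncp K). Proof. by exists 0%N. Qed.

Lemma nc_finD f g : nc_fin f -> nc_fin g -> nc_fin (f + g).
Proof.
move=> [n Hn] [m Hm]; exists (maxn n m) => s Hs.
by rewrite ncE_add Hn ?Hm ?addr0 //; move: Hs; rewrite geq_max => /andP[].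
Qed.

Lemma nc_finZ a f : nc_fin f -> nc_fin (a *: f).
Proof. by move=> [n Hn]; exists n => s Hs; rewrite ncE_scale Hn ?mulr0. Qed.

Lemma nc_finN f : nc_fin f -> nc_fin (- f).
Proof. by move=> Hf; rewrite -scaleN1r; apply: nc_finZ. Qed.

Lemma nc_finB f g : nc_fin f -> nc_fin g -> nc_fin (f - g).
Proof. by move=> Hf Hg; apply: nc_finD => //; apply: nc_finN. Qed.

Lemma nc_finM f g : nc_fin f -> nc_fin g -> nc_fin (f * g).
Proof.
move=> [n Hn] [m Hm]; exists (n + m)%N => s Hs.
rewrite -nc_mulE /nc_mul big1 // => -[i Hi] _ /=.
have [Hni|Hin] := leqP n i; first by rewrite Hn ?mul0r // size_take; case: ltnP; lia.
by rewrite Hm ?mulr0 // size_drop; lia.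
Qed.

Lemma nc_fin_mono s : nc_fin (nc_mono K s).
Proof. by exists (size s).+1 => t Ht; rewrite ncE_mono; case: eqP Ht => // ->; lia. Qed.

Lemma nc_fin1 : nc_fin (1 : ncp K). Proof. exact: nc_fin_mono. Qed.

Lemma nc_fin_alg a : nc_fin (a%:A : ncp K). Proof. exact/nc_finZ/nc_fin1. Qed.

Lemma nc_finX f n : nc_fin f -> nc_fin (f ^+ n).
Proof.
by move=> Hf; elim: n => [|n IH]; [exact: nc_fin1 | rewrite exprS; exact: nc_finM].
Qed.

Lemma nc_fin_sum (I : Type) (r : seq I) (P : pred I) (F : I -> ncp K) :
  (forall i, nc_fin (F i)) -> nc_fin (\sum_(i <- r | P i) F i).
Proof. by move=> HF; elim/big_rec: _ => [|i x _]; [exact: nc_fin0 | exact: nc_finD]. Qed.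

End FreeAlgebra.
Arguments nc_fin0 {K}.
Arguments nc_fin1 {K}.

Lemma nc_fin_d (K : fieldType) : nc_fin (ncd K). Proof. exact: nc_fin_mono. Qed.
Lemma nc_fin_u (K : fieldType) : nc_fin (ncu K). Proof. exact: nc_fin_mono. Qed.
#[global] Hint Resolve nc_fin0 nc_fin1 nc_fin_d nc_fin_u nc_fin_alg : nc_fin.
Ltac nc_fin := repeat first [ solve [auto with nc_fin] | apply: nc_finD | apply: nc_finB
  | apply: nc_finN | apply: nc_finZ | apply: nc_finM | apply: nc_finX
  | apply: nc_fin_sum => ? ].

Definition eqmod (K : fieldType) (P : ncp K -> Prop) (x y : ncp K) : Prop := P (x - y).

Section LeftIdeals.
Variables (K : fieldType) (J : ncp K -> Prop).
Hypothesis J_ideal : is_left_ideal J.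
Implicit Types (a b x y z : ncp K) (c : K).

Lemma J_fin x : J x -> nc_fin x. Proof. by case: J_ideal => H _ _ _; apply: H. Qed.
Lemma J0 : J 0. Proof. by case: J_ideal. Qed.
Lemma J_add x y : J x -> J y -> J (x + y).
Proof. by case: J_ideal => _ _ H _; apply: H. Qed.
Lemma J_mull a x : nc_fin a -> J x -> J (a * x).
Proof. by case: J_ideal => _ _ _ H; apply: H. Qed.
Lemma J_scale c x : J x -> J (c *: x).
Proof. by rewrite -mulr_algl; apply: J_mull; apply: nc_fin_alg. Qed.
Lemma J_sub x y : J x -> J y -> J (x - y).
Proof. by move=> Jx Jy; rewrite -scaleN1r; apply/J_add/J_scale. Qed.

Lemma eqmod_eq x y : x = y -> eqmod J x y.
Proof. by move=> ->; rewrite /eqmod subrr; apply: J0. Qed.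
Lemma eqmod_refl x : eqmod J x x. Proof. exact: eqmod_eq. Qed.
Lemma eqmod_trans x y z : eqmod J x y -> eqmod J y z -> eqmod J x z.
Proof. by move=> Hxy Hyz; have := J_add Hxy Hyz; rewrite /eqmod addrA subrK. Qed.
Lemma eqmod_add x y x' y' : eqmod J x y -> eqmod J x' y' -> eqmod J (x + x') (y + y').
Proof. by move=> H H'; have := J_add H H'; rewrite /eqmod opprD addrACA. Qed.
Lemma eqmod_mull a x y : nc_fin a -> eqmod J x y -> eqmod J (a * x) (a * y).
Proof. by move=> Ha H; have := J_mull Ha H; rewrite /eqmod mulrBr. Qed.
Lemma eqmod_scale c x y : eqmod J x y -> eqmod J (c *: x) (c *: y).
Proof. by move=> H; have := J_scale c H; rewrite /eqmod scalerBr. Qed.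
Lemma eqmod_sub x y x' y' : eqmod J x y -> eqmod J x' y' -> eqmod J (x - x') (y - y').
Proof. by move=> H H'; have := eqmod_add H (eqmod_scale (-1) H'); rewrite !scaleN1r. Qed.
Lemma eqmod_sum n (F G : nat -> ncp K) : (forall i, eqmod J (F i) (G i)) ->
  eqmod J (\sum_(0 <= i < n) F i) (\sum_(0 <= i < n) G i).
Proof.
move=> HFG; elim: n => [|n IH]; first by rewrite !big_geq //; exact: eqmod_refl.
by rewrite !big_nat_recr //=; apply: eqmod_add.
Qed.

(* The elements x with x K<d,u> inside J form the largest two-sided ideal
   contained in J; congruences modulo it survive right multiplication. *)
Definition two_sided x := forall b, nc_fin b -> J (x * b).

Lemma two_sided_ideal : is_left_ideal two_sided.
Proof.
split=> [x Hx | b _ | x y Hx Hy b Hb | a x Ha Hx b Hb].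
- by apply: J_fin; rewrite -[x]mulr1; exact: (Hx 1 nc_fin1).
- by rewrite mul0r; apply: J0.
- by rewrite mulrDl; apply: J_add; [apply: Hx | apply: Hy].
- by rewrite -mulrA; apply: J_mull Ha (Hx b Hb).
Qed.

Lemma eqmod_mulr x y z : nc_fin z ->
  eqmod two_sided x y -> eqmod two_sided (x * z) (y * z).
Proof. by move=> Hz H b Hb; rewrite /eqmod -mulrBl -mulrA; apply: H; apply: nc_finM. Qed.

Lemma two_sided_eqmod x y : eqmod two_sided x y -> eqmod J x y.
Proof. by move=> H; rewrite /eqmod -[_ - _]mulr1; exact: (H 1 nc_fin1). Qed.

End LeftIdeals.

Section DownUpRelations.
Variables (K : fieldType) (eta : K).
Hypothesis eta_neq1 : eta - 1 != 0.

Local Notation dd := (ncd K).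
Local Notation uu := (ncu K).

Definition eps_eta : K := (eta - 1)^-1.
Definition w_eta : ncp K := dd * uu - uu * dd + eps_eta%:A.

Ltac split_words s :=
  match goal with |- context [s == ?t] =>
    case: (eqVneq s t) => [->|?] /=; try split_words s end.

(* In terms of w, the defining relations of A(1+eta,-eta,1) say that w is
   normal:  d w = eta w d  and  w u = eta u w. *)
Lemma rel1_w : dd * w_eta - eta *: (w_eta * dd) = downup_rel1 (1 + eta) (- eta) 1.
Proof.
rewrite /w_eta /downup_rel1 mulrDr mulrBr mulrDl mulrBl !mulrA !nc_mono_cat /=.
rewrite mulr_algl mulr_algr; apply: funext => s.
rewrite /nc_sub /nc_add /nc_opp /nc_scale /ncd /=.
rewrite !(ncE_add, ncE_opp, ncE_scale, ncE_mono) /=.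
by split_words s; rewrite /eps_eta; field.
Qed.

Lemma rel2_w : w_eta * uu - eta *: (uu * w_eta) = downup_rel2 (1 + eta) (- eta) 1.
Proof.
rewrite /w_eta /downup_rel2 mulrDr mulrBr mulrDl mulrBl !mulrA !nc_mono_cat /=.
rewrite mulr_algl mulr_algr; apply: funext => s.
rewrite /nc_sub /nc_add /nc_opp /nc_scale /ncu /=.
rewrite !(ncE_add, ncE_opp, ncE_scale, ncE_mono) /=.
by split_words s; rewrite /eps_eta; field.
Qed.

End DownUpRelations.

Ltac nc_ring := apply: funext => ?; rewrite !(ncE_add, ncE_opp, ncE_scale); ring.

Lemma big_nat_shift (V : zmodType) (F : nat -> V) n :
  F 0%N = 0 -> F n = 0 -> \sum_(0 <= i < n) F i = \sum_(0 <= i < n) F i.+1.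
Proof.
case: n => [|n] F0 Fn; first by rewrite !big_geq.
by rewrite big_nat_recl // F0 add0r big_nat_recr //= Fn addr0.
Qed.

Section ModuleN.
Variables (K : fieldType) (eta : K).
Hypothesis eta_neq1 : eta - 1 != 0.
Variable J : ncp K -> Prop.
Hypothesis J_ideal : is_left_ideal J.
Hypothesis J_kernel : contains_N_kernel (1 + eta) (- eta) 1 J.

Local Notation dd := (ncd K).
Local Notation uu := (ncu K).
Local Notation w := (w_eta eta).
Local Notation eps := (eps_eta eta).
(* [Irel] is a two-sided ideal containing the defining relations of A_eta;
   congruences modulo it are identities in A_eta. *)
Local Notation Irel := (two_sided J).
Let Irel_ideal : is_left_ideal Irel := two_sided_ideal J_ideal.

Lemma nc_fin_w : nc_fin w. Proof. by rewrite /w_eta; nc_fin. Qed.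
Hint Resolve nc_fin_w : nc_fin.

Lemma rel1_Irel : eqmod Irel (dd * w) (eta *: (w * dd)).
Proof. by move=> b Hb; rewrite /eqmod rel1_w //; case: J_kernel => H _ _; apply: H. Qed.

Lemma rel2_Irel : eqmod Irel (w * uu) (eta *: (uu * w)).
Proof. by move=> b Hb; rewrite /eqmod rel2_w //; case: J_kernel => _ H _; apply: H. Qed.

Fixpoint qint n : K := if n is n'.+1 then 1 + eta * qint n' else 0.

Lemma du_w : dd * uu = uu * dd + w - eps%:A.
Proof. by rewrite /w_eta; nc_ring. Qed.

Lemma d_upow i : eqmod Irel (dd * uu ^+ i.+1)
   (uu ^+ i.+1 * dd + qint i.+1 *: (uu ^+ i * w) - (i.+1%:R * eps) *: uu ^+ i).
Proof.
elim: i => [|i IH].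
  by apply: (eqmod_eq Irel_ideal); rewrite expr1 expr0 !mul1r /= mulr0 addr0 du_w; nc_ring.
apply: (eqmod_trans Irel_ideal (_ : eqmod Irel _ ((uu ^+ i.+1 * dd
   + qint i.+1 *: (uu ^+ i * w) - (i.+1%:R * eps) *: uu ^+ i) * uu))).
  by rewrite exprSr mulrA; apply: eqmod_mulr => //; nc_fin.
rewrite mulrBl mulrDl -!scalerAl -!mulrA -exprSr.
apply: (eqmod_trans Irel_ideal (_ : eqmod Irel _ (uu ^+ i.+1 * (dd * uu)
   + qint i.+1 *: (uu ^+ i * (eta *: (uu * w))) - (i.+1%:R * eps) *: uu ^+ i.+1))).
  apply: (eqmod_sub Irel_ideal); last exact: (eqmod_refl Irel_ideal).
  apply: (eqmod_add Irel_ideal); first exact: (eqmod_refl Irel_ideal).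
  by apply/(eqmod_scale Irel_ideal)/(eqmod_mull Irel_ideal); [nc_fin | exact: rel2_Irel].
apply: (eqmod_eq Irel_ideal).
rewrite du_w mulrBr mulrDr mulr_algr -scalerAr scalerA !mulrA -!exprSr /=.
nc_ring.
Qed.

Lemma d_wpow m : eqmod Irel (dd * w ^+ m) (eta ^+ m *: (w ^+ m * dd)).
Proof.
elim: m => [|m IH].
  by apply: (eqmod_eq Irel_ideal); rewrite !expr0 scale1r mul1r mulr1.
apply: (eqmod_trans Irel_ideal (_ : eqmod Irel _ ((eta *: (w * dd)) * w ^+ m))).
  by rewrite exprS mulrA; apply: eqmod_mulr => //; [nc_fin | exact: rel1_Irel].
apply: (eqmod_trans Irel_ideal
         (_ : eqmod Irel _ (eta *: (w * (eta ^+ m *: (w ^+ m * dd)))))).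
  rewrite -scalerAl -mulrA.
  by apply/(eqmod_scale Irel_ideal)/(eqmod_mull Irel_ideal); nc_fin.
by apply: (eqmod_eq Irel_ideal); rewrite -scalerAr scalerA mulrA -!exprS.
Qed.

Lemma absorb_d y : nc_fin y -> eqmod J (y * dd) y.
Proof.
move=> Hy; rewrite /eqmod -{2}[y]mulr1 -mulrBr; apply: (J_mull J_ideal Hy).
by case: J_kernel.
Qed.

Definition X i m : ncp K := uu ^+ i * w ^+ m.

Lemma d_action i m : eqmod J (dd * X i m)
  (eta ^+ m *: X i m + qint i *: X i.-1 m.+1 - (i%:R * eps) *: X i.-1 m).
Proof.
case: i => [|i] /=.
  rewrite mul0r !scale0r addr0 subr0 /X expr0 !mul1r.
  apply: (eqmod_trans J_ideal (two_sided_eqmod (d_wpow m))).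
  by apply/(eqmod_scale J_ideal)/absorb_d; nc_fin.
apply: (eqmod_trans J_ideal (_ : eqmod J _ ((uu ^+ i.+1 * dd
   + qint i.+1 *: (uu ^+ i * w) - (i.+1%:R * eps) *: uu ^+ i) * w ^+ m))).
  rewrite /X mulrA; apply: two_sided_eqmod; apply: eqmod_mulr; first by nc_fin.
  exact: (d_upow i).
rewrite mulrBl mulrDl -!scalerAl -!mulrA -exprS.
apply: (eqmod_sub J_ideal); last exact: (eqmod_refl J_ideal).
apply: (eqmod_add J_ideal); last exact: (eqmod_refl J_ideal).
apply: (eqmod_trans J_ideal (_ : eqmod J _ (uu ^+ i.+1 * (eta ^+ m *: (w ^+ m * dd))))).
  apply: two_sided_eqmod; apply: (eqmod_mull Irel_ideal); first by nc_fin.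
  exact: (d_wpow m).
by rewrite -scalerAr mulrA; apply/(eqmod_scale J_ideal)/absorb_d; nc_fin.
Qed.

Definition supported n (c : nat -> nat -> K) := forall i m, (n <= i + m)%N -> c i m = 0.

Definition comb n (c : nat -> nat -> K) : ncp K :=
  \sum_(0 <= i < n) \sum_(0 <= m < n) c i m *: X i m.

Lemma supportedS n c : supported n c -> supported n.+1 c.
Proof. by move=> Hc i m Him; apply: Hc; lia. Qed.

Lemma combD n c1 c2 : comb n (fun i m => c1 i m + c2 i m) = comb n c1 + comb n c2.
Proof.
rewrite /comb -big_split; apply: eq_bigr => i _.
by rewrite -big_split; apply: eq_bigr => m _; rewrite scalerDl.
Qed.

Lemma combB n c1 c2 : comb n (fun i m => c1 i m - c2 i m) = comb n c1 - comb n c2.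
Proof.
rewrite /comb -sumrB; apply: eq_bigr => i _.
by rewrite -sumrB; apply: eq_bigr => m _; rewrite scalerBl.
Qed.

Lemma combZ n a c : comb n (fun i m => a * c i m) = a *: comb n c.
Proof.
rewrite /comb scaler_sumr; apply: eq_bigr => i _.
by rewrite scaler_sumr; apply: eq_bigr => m _; rewrite scalerA.
Qed.

Lemma comb0 n : comb n (fun _ _ => 0) = 0.
Proof. by rewrite /comb big1 // => i _; rewrite big1 // => m _; rewrite scale0r. Qed.

Lemma combS n c : supported n c -> comb n.+1 c = comb n c.
Proof.
move=> Hc; rewrite /comb big_nat_recr //= [Y in _ + Y]big1 => [|m _]; last first.
  by rewrite Hc ?scale0r //; lia.
rewrite addr0; apply: eq_bigr => i _.
by rewrite big_nat_recr //= Hc ?scale0r ?addr0 //; lia.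
Qed.

Lemma comb_single n c i0 m0 : (i0 < n)%N -> (m0 < n)%N ->
  (forall i m, (i != i0) || (m != m0) -> c i m = 0) -> comb n c = c i0 m0 *: X i0 m0.
Proof.
move=> Hi Hm Hc; have uniq_iota k : uniq (index_iota 0 k) by apply: iota_uniq.
rewrite /comb (bigD1_seq i0) ?mem_index_iota ?uniq_iota //=.
rewrite [Y in _ + Y]big1 => [|i Hi0]; last first.
  by rewrite big1 // => m _; rewrite Hc ?scale0r // Hi0.
rewrite addr0 (bigD1_seq m0) ?mem_index_iota ?uniq_iota //=.
rewrite [Y in _ + Y]big1 ?addr0 // => m Hm0.
by rewrite Hc ?scale0r // Hm0 orbT.
Qed.

Definition ucoef (c : nat -> nat -> K) i m := if i is i'.+1 then c i' m else 0.

Lemma comb_u n c : supported n c -> uu * comb n c = comb n.+1 (ucoef c).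
Proof.
move=> Hc; rewrite /comb big_nat_recl //= [Y in Y + _]big1 => [|m _]; last first.
  by rewrite scale0r.
rewrite add0r mulr_sumr; apply: eq_bigr => i _.
rewrite big_nat_recr //= Hc ?scale0r ?addr0; last lia.
rewrite mulr_sumr; apply: eq_bigr => m _.
by rewrite -scalerAr /X mulrA -exprS.
Qed.

Definition dcoef (c : nat -> nat -> K) i m :=
  eta ^+ m * c i m + (if m is m'.+1 then qint i.+1 * c i.+1 m' else 0)
  - (i.+1%:R * eps) * c i.+1 m.

Lemma dcoef_supported n c : supported n c -> supported n (dcoef c).
Proof.
move=> Hc i m Him; rewrite /dcoef !Hc ?mulr0 ?add0r ?subr0; try lia.
by case: m Him => [|m] Him //; rewrite Hc ?mulr0 //; lia.
Qed.

Lemma comb_d n c : supported n c -> eqmod J (dd * comb n c) (comb n (dcoef c)).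
Proof.
move=> Hc.
have -> : dd * comb n c = \sum_(0 <= i < n) \sum_(0 <= m < n) c i m *: (dd * X i m).
  by rewrite /comb mulr_sumr; apply: eq_bigr => i _; rewrite mulr_sumr;
     apply: eq_bigr => m _; rewrite -scalerAr.
apply: (eqmod_trans J_ideal (eqmod_sum J_ideal _ (fun i => eqmod_sum J_ideal _ (fun m =>
          eqmod_scale J_ideal (c i m) (d_action i m))))).
apply: (eqmod_eq J_ideal).
have up : \sum_(0 <= i < n) \sum_(0 <= m < n) c i m *: (qint i *: X i.-1 m.+1)
    = comb n (fun i m => if m is m'.+1 then qint i.+1 * c i.+1 m' else 0).
  rewrite big_nat_shift; first last.
  - by rewrite big1 // => m _; rewrite Hc ?scale0r //; lia.
  - by rewrite big1 // => m _; rewrite /= scale0r scaler0.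
  apply: eq_bigr => i _; rewrite [RHS]big_nat_shift; first last.
  - by case: n Hc => [|n] Hc; rewrite ?scale0r // Hc ?mulr0 ?scale0r //; lia.
  - by rewrite scale0r.
  by apply: eq_bigr => m _; rewrite scalerA mulrC.
have diag : \sum_(0 <= i < n) \sum_(0 <= m < n) c i m *: (eta ^+ m *: X i m)
    = comb n (fun i m => eta ^+ m * c i m).
  by apply: eq_bigr => i _; apply: eq_bigr => m _; rewrite scalerA mulrC.
have left : \sum_(0 <= i < n) \sum_(0 <= m < n) c i m *: ((i%:R * eps) *: X i.-1 m)
    = comb n (fun i m => (i.+1%:R * eps) * c i.+1 m).
  rewrite big_nat_shift; first last.
  - by rewrite big1 // => m _; rewrite Hc ?scale0r //; lia.
  - by rewrite big1 // => m _; rewrite mul0r scale0r scaler0.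
  by apply: eq_bigr => i _; apply: eq_bigr => m _; rewrite scalerA mulrC.
rewrite /dcoef combB combD -diag -up -left.
under eq_bigr => i _ do under eq_bigr => m _ do rewrite scalerBr scalerDr.
under eq_bigr => i _ do rewrite sumrB big_split.
by rewrite sumrB big_split.
Qed.

(* Modulo J, every noncommutative polynomial of degree < n is a combination
   of the u^i w^m supported in i + m < n: peel off the first letter and use
   [comb_d] and [comb_u]. *)
Lemma spanning n f : (forall s, (n <= size s)%N -> f s = 0) ->
  exists c, supported n c /\ eqmod J f (comb n c).
Proof.
elim: n f => [|n IH] f Hf.
  exists (fun _ _ => 0); split => //; apply: (eqmod_eq J_ideal).
  by rewrite comb0; apply: funext => s; rewrite Hf.
have [cd [Hd Ed]] := IH (nc_tail false f) (fun s Hs => Hf (false :: s) Hs).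
have [cu [Hu Eu]] := IH (nc_tail true f) (fun s Hs => Hf (true :: s) Hs).
pose c0 i m := if (i == 0%N) && (m == 0%N) then f [::] else 0.
exists (fun i m => c0 i m + dcoef cd i m + ucoef cu i m); split.
  move=> i m Him; rewrite (supportedS (dcoef_supported Hd)) // addr0.
  case: i Him => [|i] Him /=; last by rewrite Hu ?addr0 //; lia.
  by case: m Him => [|m] Him //; rewrite addr0.
rewrite 2!combD (@comb_single _ c0 0 0) // => [|i m]; last first.
  by rewrite /c0; case: eqP; case: eqP.
rewrite /X !expr0 mulr1 -comb_u // combS; last exact: (dcoef_supported Hd).
rewrite {1}[f]nc_first_letter; apply: (eqmod_add J_ideal); last first.
  by apply: (eqmod_mull J_ideal) => //; nc_fin.
apply: (eqmod_add J_ideal); first exact: (eqmod_refl J_ideal).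
apply: (eqmod_trans J_ideal _ (comb_d Hd)).
by apply: (eqmod_mull J_ideal) => //; nc_fin.
Qed.

Hypotheses (eta_neq0 : eta != 0) (eta_not_root : forall n, (0 < n)%N -> eta ^+ n != 1).
Hypothesis char0 : [pchar K] =i pred0.

(* The eigenvalues eta^m of d on the columns are pairwise distinct. *)
Lemma eta_expr_neq m B : (m < B)%N -> eta ^+ m != eta ^+ B.
Proof.
move=> lt_mB; rewrite -(subnKC (ltnW lt_mB)) exprD -{1}(mulr1 (eta ^+ m)).
by rewrite (inj_eq (mulfI (expf_neq0 m eta_neq0))) eq_sym eta_not_root // subn_gt0.
Qed.

Lemma natr_neq0 n : n.+1%:R != 0 :> K.
Proof. by have /pcharf0P -> := char0. Qed.

Lemma eps_neq0 : eps != 0. Proof. by rewrite invr_eq0. Qed.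

Definition dsub (lam : K) (c : nat -> nat -> K) i m := dcoef c i m - lam * c i m.

Lemma dsub_supported n lam c : supported n c -> supported n (dsub lam c).
Proof. by move=> Hc i m Him; rewrite /dsub (dcoef_supported Hc) // Hc // mulr0 subr0. Qed.

Lemma comb_dsub n lam c : supported n c -> J (comb n c) -> J (comb n (dsub lam c)).
Proof.
move=> Hc Jc; rewrite /dsub combB combZ.
have Jd : J (dd * comb n c) by apply: (J_mull J_ideal) => //; nc_fin.
have := J_sub J_ideal (J_sub J_ideal Jd (comb_d Hc)) (J_scale J_ideal lam Jc).
by rewrite opprB [dd * _ + _]addrC subrK.
Qed.

Definition rows_le I (c : nat -> nat -> K) := forall i m, (I < i)%N -> c i m = 0.

Lemma dsub_rows_le I lam c : rows_le I c -> rows_le I (dsub lam c).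
Proof.
move=> Hc i m Hi; rewrite /dsub /dcoef !Hc ?mulr0 ?subr0 ?add0r; try lia.
by case: m => [|m] //; rewrite Hc ?mulr0 //; lia.
Qed.

Lemma dsub_top_row I lam c m : rows_le I c -> dsub lam c I m = (eta ^+ m - lam) * c I m.
Proof.
move=> Hc; rewrite /dsub /dcoef (Hc I.+1 m (ltnSn I)) mulr0 subr0 mulrBl.
by case: m => [|m] //=; rewrite ?addr0 // (Hc I.+1 m (ltnSn I)) mulr0 addr0.
Qed.

Lemma dsub_lower_row I B c : rows_le I.+1 c -> (forall m, (m < B)%N -> c I.+1 m = 0) ->
  dsub (eta ^+ B) c I B = - (I.+1%:R * eps) * c I.+1 B.
Proof.
move=> Hc HB; rewrite /dsub /dcoef.
have -> : (if B is m'.+1 then qint I.+1 * c I.+1 m' else 0) = 0.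
  by case: B HB => [|B] HB //; rewrite HB ?mulr0.
by rewrite addr0 addrAC subrr add0r mulNr.
Qed.

Definition single_in_row I B (c : nat -> nat -> K) :=
  c I B != 0 /\ forall m, m != B -> c I m = 0.

Lemma isolate_row n I B c : supported n c -> rows_le I c ->
  (forall m, (B <= m)%N -> c I m = 0) -> (exists m, c I m != 0) -> J (comb n c) ->
  exists c' B', [/\ supported n c', rows_le I c', single_in_row I B' c' & J (comb n c')].
Proof.
elim: B c => [|B IH] c Hs Hr Hb [m0 Hm0] HJ; first by rewrite Hb ?eqxx in Hm0.
have [HB|HB] := eqVneq (c I B) 0.
  apply: (IH c) => //; last by exists m0.
  by move=> m; rewrite leq_eqVlt => /orP [/eqP <- | /Hb].
have [[m1 [lt_m1B Hm1]]|Hlow] := pselect (exists m, (m < B)%N /\ c I m != 0).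
  apply: (IH (dsub (eta ^+ B) c)).
  - exact: dsub_supported.
  - exact: dsub_rows_le.
  - move=> m; rewrite (dsub_top_row _ _ Hr) leq_eqVlt => /orP [/eqP <- | /Hb ->].
      by rewrite subrr mul0r.
    by rewrite mulr0.
  - by exists m1; rewrite (dsub_top_row _ _ Hr) mulf_neq0 // subr_eq0 eta_expr_neq.
  - exact: comb_dsub.
exists c, B; split => //; split => // m HmB.
have [lt_mB|lt_Bm|eq_mB] := ltngtP m B; last by rewrite eq_mB eqxx in HmB.
  by apply/eqP/negPn/negP => Hm; apply: Hlow; exists m.
exact: Hb.
Qed.

Lemma lower_row I B c : rows_le I.+1 c -> single_in_row I.+1 B c ->
  rows_le I (dsub (eta ^+ B) c) /\ dsub (eta ^+ B) c I B != 0.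
Proof.
move=> Hr [HB Hrow]; split.
  move=> i m Hi; have [lt_iI|lt_Ii|->] := ltngtP i I.+1; first lia.
    exact: (dsub_rows_le _ Hr).
  rewrite (dsub_top_row _ _ Hr); have [->|/Hrow ->] := eqVneq m B.
    by rewrite subrr mul0r.
  by rewrite mulr0.
rewrite (dsub_lower_row Hr) => [|m lt_mB]; last by apply: Hrow; rewrite ltn_eqF.
by rewrite mulf_neq0 // oppr_eq0 mulf_neq0 ?natr_neq0 ?eps_neq0.
Qed.

Lemma row0_single n B c : supported n c -> rows_le 0 c -> single_in_row 0 B c ->
  J (comb n c) -> J (w ^+ B).
Proof.
move=> Hs Hr [HB Hrow].
have lt_Bn : (B < n)%N.
  by rewrite ltnNge; apply: contra HB => le_nB; rewrite Hs.
rewrite (@comb_single n c 0 B) ?(leq_ltn_trans (leq0n B) lt_Bn) //; last first.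
  by move=> [|i] m /= Hm; [exact: Hrow | exact: Hr].
move=> /(J_scale J_ideal (c 0%N B)^-1).
by rewrite scalerA mulVf // scale1r /X expr0 mul1r.
Qed.

Lemma descent I n c : supported n c -> rows_le I c -> (exists i m, c i m != 0) ->
  J (comb n c) -> exists m, J (w ^+ m).
Proof.
have row_bound c' I' : supported n c' -> forall m, (n <= m)%N -> c' I' m = 0.
  by move=> Hs m Hm; apply: Hs; lia.
elim: I c => [|I IH] c Hs Hr [i [m Hm]] HJ.
  have Hrow : exists m, c 0%N m != 0.
    by case: i Hm => [|i] Hm; [exists m | rewrite Hr ?eqxx in Hm].
  have [c' [B [Hs' Hr' Hsingle HJ']]] := isolate_row Hs Hr (row_bound _ _ Hs) Hrow HJ.
  by exists B; apply: (row0_single Hs' Hr' Hsingle).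
have [Hrow|Hrow0] := pselect (exists m, c I.+1 m != 0).
  have [c' [B [Hs' Hr' Hsingle HJ']]] := isolate_row Hs Hr (row_bound _ _ Hs) Hrow HJ.
  have [Hr'' HIB] := lower_row Hr' Hsingle.
  apply: (IH _ (dsub_supported _ Hs') Hr'' _ (comb_dsub _ Hs' HJ')).
  by exists I, B.
apply: (IH c Hs _ _ HJ); last by exists i, m.
move=> i' m' Hi'; have [lt_i'I|lt_Ii'|->] := ltngtP i' I.+1; first lia.
  exact: Hr.
by apply/eqP/negPn/negP => Hm'; apply: Hrow0; exists m'.
Qed.

End ModuleN.

Section Kernel.
Variables (K : fieldType) (al be ga : K).

Lemma nc_fin_rel1 : nc_fin (downup_rel1 al be ga).
Proof. by rewrite /downup_rel1; nc_fin; apply: nc_fin_mono. Qed.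

Lemma nc_fin_rel2 : nc_fin (downup_rel2 al be ga).
Proof. by rewrite /downup_rel2; nc_fin; apply: nc_fin_mono. Qed.

(* The genuine polynomials themselves form a left ideal containing the kernel;
   hence the kernel, the intersection of all such ideals, is one of them. *)
Lemma nc_fin_ideal : is_left_ideal (@nc_fin K).
Proof. by split=> // [|x y|a x]; [exact: nc_fin0 | exact: nc_finD | exact: nc_finM]. Qed.

Lemma nc_fin_kernel : contains_N_kernel al be ga (@nc_fin K).
Proof.
split=> [b Hb | b Hb |]; [exact: nc_finM nc_fin_rel1 Hb | exact: nc_finM nc_fin_rel2 Hb |].
exact: nc_finB (nc_fin_d K) nc_fin1.
Qed.

Lemma N_kernel_ideal : is_left_ideal (N_kernel al be ga).
Proof.
split=> [x Hx | J HJ _ | x y Hx Hy J HJ HK | a x Ha Hx J HJ HK].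
- exact: Hx _ nc_fin_ideal nc_fin_kernel.
- exact: J0.
- by apply: J_add => //; [apply: Hx | apply: Hy].
- by apply: J_mull => //; apply: Hx.
Qed.

Lemma N_kernel_contains : contains_N_kernel al be ga (N_kernel al be ga).
Proof. by split=> [b Hb J _ [H _ _] | b Hb J _ [_ H _] | J _ [_ _ H]]; apply: H. Qed.

End Kernel.

Theorem lemma4p4 (K : fieldType) (eta : K) :
  [pchar K] =i pred0 ->
  eta != 0 ->
  (forall n : nat, (0 < n)%N -> eta ^+ n != 1) ->
  let eps := (eta - 1)^-1 in
  let w := nc_add (nc_sub (nc_mono K [:: false; true]) (nc_mono K [:: true; false]))
                  (nc_const eps) in
  forall J : ncp K -> Prop,
    is_left_ideal J ->
    contains_N_kernel (1 + eta) (- eta) 1 J ->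
    (exists x, J x /\ ~ N_kernel (1 + eta) (- eta) 1 x) ->
    exists m : nat, J (nc_exp w m).
Proof.
move=> char0 eta_neq0 eta_not_root eps w J J_ideal J_kernel [x [Jx x_notin]].
have eta_neq1 : eta - 1 != 0 by rewrite subr_eq0 -[eta]expr1 eta_not_root.
have -> : w = w_eta eta.
  by rewrite /w /w_eta -(nc_mono_cat _ [:: false] [:: true]) -(nc_mono_cat _ [:: true] [:: false]).
have [n Hn] := J_fin J_ideal Jx.
have [c [Hc x_c]] := spanning eta_neq1 (N_kernel_ideal _ _ _) (N_kernel_contains _ _ _) Hn.
have Jc : J (comb eta n c).
  by have := J_sub J_ideal Jx (x_c J J_ideal J_kernel); rewrite opprB addrC subrK.
have c_nz : exists i m, c i m != 0.
  apply: contra_notP x_notin => c_0; move: x_c; rewrite /eqmod.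
  have -> : c = fun _ _ => 0.
    apply/funext => i; apply/funext => m.
    by apply/eqP/negPn/negP => Hc0; apply: c_0; exists i, m.
  by rewrite comb0 subr0.
have [m Jw] := descent eta_neq1 J_ideal J_kernel eta_neq0 eta_not_root char0 Hc
  (fun i m Hi => Hc i m (leq_trans (ltnW Hi) (leq_addr _ _))) c_nz Jc.
by exists m; rewrite nc_expE.
Qed.
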